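(* Let $\rho\in(0,1)$, $\lambda=\frac{1-\rho}{1+\rho}$, and let $x_i(k)$, $i\in\mathbb Z$, $k\ge0$, be real numbers with $|x_i(k)|<M$ for some $M<\infty$. Define $y_i(k)$ for all $i\in\mathbb Z$, $k\ge0$ by $y_i(0)=\lambda x_i(0)$; $y_i(1)=y_i(0)+\rho(y_{i-1}(0)+y_{i+1}(0))+\lambda(x_i(1)-x_i(0))$; $y_i(2)=y_i(1)+\rho(y_{i-1}(1)-y_{i-1}(0))+\rho(y_{i+1}(1)-y_{i+1}(0))-2\rho^2y_i(0)+\lambda(x_i(2)-x_i(1))$; and for $k\ge2$, $y_i(k+1)=y_i(k)+\rho(y_{i-1}(k)-y_{i-1}(k-1))+\rho(y_{i+1}(k)-y_{i+1}(k-1))-\rho^2(y_i(k-1)-y_i(k-2))+\lambda(x_i(k+1)-x_i(k))-\rho^2\lambda(x_i(k-1)-x_i(k-2))$. Then for all $i\in\mathbb Z$ and all $k\ge0$, $$y_i(k)=\frac{1-\rho}{1+\rho}\Big(x_i(k)+\sum_{j=1}^k\rho^j\big(x_{i-j}(k-j)+x_{i+j}(k-j)\big)\Big).$$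
   Context: Sensors indexed by $i\in\mathbb Z$ on a line; at each time $k=0,1,2,\dots$ sensor $i$ takes a (time-varying) measurement $x_i(k)$ and maintains a consensus variable $y_i(k)$; sensor $i$ may use only its own measurements and the consensus variables of sensors $i\pm1$. *)

From Stdlib Require Import Reals ZArith.
Open Scope R_scope.

Fixpoint sum_1_to (k : nat) (f : nat -> R) : R :=
  match k with
  | O => 0
  | S k' => sum_1_to k' f + f (S k')
  end.

(* Write l = (1-rho)/(1+rho).  For a direction d (= -1 or +1) let the ray sum
     R_d x i k = x_i(k) + sum_{j=1..k} rho^j x_{i+jd}(k-j)
   collect the measurements travelling towards sensor i from one side.  Ray
   sums obey the one-step recursion R_d x i (k+1) = x_i(k+1) + rho R_d x (i+d) k,
   and the claimed value of y_i(k) is  l (R_{-1} x i k + R_{+1} x i k - x_i(k)).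

   Since those
   equations determine y_i(k) from values at earlier times, a strong induction
   on k shows that y coincides with the candidate. *)

From Stdlib Require Import Reals ZArith Lia.
Open Scope R_scope.

Lemma sum_1_to_ext k f g :
  (forall j, f j = g j) -> sum_1_to k f = sum_1_to k g.
Proof. intros Hfg; induction k; simpl; [reflexivity | rewrite IHk, Hfg; reflexivity]. Qed.

Lemma sum_1_to_plus k f g :
  sum_1_to k (fun j => f j + g j) = sum_1_to k f + sum_1_to k g.
Proof. induction k; simpl; [ring | rewrite IHk; ring]. Qed.

Lemma sum_1_to_scal k c f :
  sum_1_to k (fun j => c * f j) = c * sum_1_to k f.
Proof. induction k; simpl; [ring | rewrite IHk; ring]. Qed.

Lemma sum_1_to_shift k f :
  sum_1_to (S k) f = f 1%nat + sum_1_to k (fun j => f (S j)).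
Proof. induction k; simpl in *; [ring | rewrite IHk; ring]. Qed.

Definition ray_sum (rho : R) (x : Z -> nat -> R) (d i : Z) (k : nat) : R :=
  x i k + sum_1_to k (fun j => rho ^ j * x (i + Z.of_nat j * d)%Z (k - j)%nat).

Lemma ray_sum_0 rho x d i : ray_sum rho x d i 0 = x i 0%nat.
Proof. unfold ray_sum; simpl; ring. Qed.

Lemma ray_sum_S rho x d i k :
  ray_sum rho x d i (S k) = x i (S k) + rho * ray_sum rho x d (i + d)%Z k.
Proof.
  unfold ray_sum; rewrite sum_1_to_shift.
  replace (sum_1_to k (fun j => rho ^ S j * x (i + Z.of_nat (S j) * d)%Z (S k - S j)%nat))
    with (rho * sum_1_to k (fun j => rho ^ j * x (i + d + Z.of_nat j * d)%Z (k - j)%nat)).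
  - replace (i + Z.of_nat 1 * d)%Z with (i + d)%Z by lia.
    replace (S k - 1)%nat with k by lia.
    simpl; ring.
  - rewrite <- sum_1_to_scal; apply sum_1_to_ext; intros j.
    replace (i + Z.of_nat (S j) * d)%Z with (i + d + Z.of_nat j * d)%Z by lia.
    simpl; ring.
Qed.

Section ClosedForm.

Variables (rho : R) (x : Z -> nat -> R).

Let l : R := (1 - rho) / (1 + rho).

(* The candidate value of y_i(k): both rays, with x_i(k) counted once. *)
Definition candidate (i : Z) (k : nat) : R :=
  l * (ray_sum rho x (-1) i k + ray_sum rho x 1 i k - x i k).

Let step_left j : (j + -1)%Z = (j - 1)%Z.
Proof. lia. Qed.

Let back_and_forth i : ((i - 1 + 1)%Z = i) /\ ((i + 1 - 1)%Z = i).
Proof. split; lia. Qed.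

Lemma candidate_0 i : candidate i 0 = l * x i 0%nat.
Proof. unfold candidate; rewrite !ray_sum_0; ring. Qed.

Lemma candidate_1 i : candidate i 1 =
  candidate i 0 + rho * (candidate (i - 1)%Z 0 + candidate (i + 1)%Z 0)
  + l * (x i 1%nat - x i 0%nat).
Proof.
  unfold candidate; rewrite !ray_sum_S, !ray_sum_0, !step_left; ring.
Qed.

Lemma candidate_2 i : candidate i 2 =
  candidate i 1 + rho * (candidate (i - 1)%Z 1 - candidate (i - 1)%Z 0)
  + rho * (candidate (i + 1)%Z 1 - candidate (i + 1)%Z 0)
  - 2 * rho ^ 2 * candidate i 0
  + l * (x i 2%nat - x i 1%nat).
Proof.
  destruct (back_and_forth i) as [Hl Hr].
  unfold candidate; rewrite !ray_sum_S, !ray_sum_0, !step_left, Hl, Hr; ring.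
Qed.

(* The general step from time k + 2 to k + 3 (the paper's step from k' >= 2,
   with k' = k + 2 so that no truncated subtraction on nat appears). *)
Lemma candidate_step i k : candidate i (S (S (S k))) =
  candidate i (S (S k))
  + rho * (candidate (i - 1)%Z (S (S k)) - candidate (i - 1)%Z (S k))
  + rho * (candidate (i + 1)%Z (S (S k)) - candidate (i + 1)%Z (S k))
  - rho ^ 2 * (candidate i (S k) - candidate i k)
  + l * (x i (S (S (S k))) - x i (S (S k)))
  - rho ^ 2 * l * (x i (S k) - x i k).
Proof.
  destruct (back_and_forth i) as [Hl Hr].
  unfold candidate; rewrite !ray_sum_S, !step_left, Hl, Hr; ring.
Qed.

End ClosedForm.

Lemma candidate_eq_sum rho x i k :
  candidate rho x i k = (1 - rho) / (1 + rho) *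
    (x i k + sum_1_to k (fun j =>
       rho ^ j * (x (i - Z.of_nat j)%Z (k - j)%nat + x (i + Z.of_nat j)%Z (k - j)%nat))).
Proof.
  assert (Hleft : sum_1_to k (fun j => rho ^ j * x (i + Z.of_nat j * -1)%Z (k - j)%nat)
                = sum_1_to k (fun j => rho ^ j * x (i - Z.of_nat j)%Z (k - j)%nat)).
  { apply sum_1_to_ext; intros j.
    replace (i + Z.of_nat j * -1)%Z with (i - Z.of_nat j)%Z by lia; reflexivity. }
  assert (Hright : sum_1_to k (fun j => rho ^ j * x (i + Z.of_nat j * 1)%Z (k - j)%nat)
                 = sum_1_to k (fun j => rho ^ j * x (i + Z.of_nat j)%Z (k - j)%nat)).
  { apply sum_1_to_ext; intros j; rewrite Z.mul_1_r; reflexivity. }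
  rewrite (sum_1_to_ext k _ (fun j => rho ^ j * x (i - Z.of_nat j)%Z (k - j)%nat
                                    + rho ^ j * x (i + Z.of_nat j)%Z (k - j)%nat))
    by (intros j; ring).
  unfold candidate, ray_sum; rewrite Hleft, Hright, sum_1_to_plus; ring.
Qed.

Theorem theorem4 (rho M : R) (x y : Z -> nat -> R)
  (Hrho : 0 < rho < 1)
  (HM : forall i k, Rabs (x i k) < M)
  (Hy0 : forall i, y i 0%nat = (1 - rho) / (1 + rho) * x i 0%nat)
  (Hy1 : forall i, y i 1%nat =
      y i 0%nat + rho * (y (i - 1)%Z 0%nat + y (i + 1)%Z 0%nat)
      + (1 - rho) / (1 + rho) * (x i 1%nat - x i 0%nat))
  (Hy2 : forall i, y i 2%nat =
      y i 1%nat + rho * (y (i - 1)%Z 1%nat - y (i - 1)%Z 0%nat)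
      + rho * (y (i + 1)%Z 1%nat - y (i + 1)%Z 0%nat)
      - 2 * rho ^ 2 * y i 0%nat
      + (1 - rho) / (1 + rho) * (x i 2%nat - x i 1%nat))
  (Hyk : forall i (k : nat), (2 <= k)%nat ->
      y i (S k) =
      y i k + rho * (y (i - 1)%Z k - y (i - 1)%Z (k - 1)%nat)
      + rho * (y (i + 1)%Z k - y (i + 1)%Z (k - 1)%nat)
      - rho ^ 2 * (y i (k - 1)%nat - y i (k - 2)%nat)
      + (1 - rho) / (1 + rho) * (x i (S k) - x i k)
      - rho ^ 2 * ((1 - rho) / (1 + rho)) * (x i (k - 1)%nat - x i (k - 2)%nat)) :
  forall (i : Z) (k : nat),
    y i k = (1 - rho) / (1 + rho) *
      (x i k + sum_1_to k (fun j =>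
         rho ^ j * (x (i - Z.of_nat j)%Z (k - j)%nat + x (i + Z.of_nat j)%Z (k - j)%nat))).
Proof.
  assert (Hagree : forall n k i, (k <= n)%nat -> y i k = candidate rho x i k).
  { induction n as [|n IH]; intros k i Hk.
    - replace k with 0%nat by lia; rewrite Hy0, candidate_0; reflexivity.
    - destruct (Nat.le_gt_cases k n) as [Hkn | Hkn]; [exact (IH k i Hkn) |].
      replace k with (S n) by lia.
      destruct n as [| [| m]].
      + rewrite Hy1, candidate_1, !IH by lia; reflexivity.
      + rewrite Hy2, candidate_2, !IH by lia; reflexivity.
      + rewrite Hyk, candidate_step by lia.
        replace (S (S m) - 1)%nat with (S m) by lia.
        replace (S (S m) - 2)%nat with m by lia.
        rewrite !IH by lia; reflexivity. }
  intros i k; rewrite (Hagree k k i), candidate_eq_sum by lia; reflexivity.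
Qed.
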